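(* Let $\Omega\subset\mathbb{P}(\mathbb{R}^d)$ be a properly convex domain, $\mathcal{C}\subset\Omega$ a non-empty closed convex subset, and $G\le\mathrm{Stab}_\Omega(\mathcal{C})$ a subgroup acting co-compactly on $\mathcal{C}$. If $x\in\partial_i\mathcal{C}$, then there exists a non-zero $T\in\overline{G}^{\mathrm{End}}$ such that (1) $\mathbb{P}(\ker T)\cap\Omega=\emptyset$, (2) $T(\Omega)=F_\Omega(x)$, and (3) $T(\mathcal{C})=F_\Omega(x)\cap\partial_i\mathcal{C}$, where for $p=[v]\in\Omega$ we write $T(p)=[Tv]$.
   Context: Properly convex domain: open subset of $\mathbb{P}(\mathbb{R}^d)$ which is a bounded convex set in some affine chart. $\mathrm{Stab}_\Omega(X)=\{g\in\mathrm{Aut}(\Omega):gX=X\}$. For $G\le\mathrm{PGL}_d(\mathbb{R})$, $\overline{G}^{\mathrm{End}}$ is the closure in $\mathrm{End}(\mathbb{R}^d)$ of $\{g\in\mathrm{GL}_d(\mathbb{R}):[g]\in G\}$. For a convex set $C$: $\mathrm{relint}(C)$ is its interior in the projective span, $\partial C=\overline{C}\setminus\mathrm{relint}(C)$, and the ideal boundary is $\partial_i C=\partial C\setminus C$. Open face: $F_\Omega(x)=\{x\}\cup\{y\in\overline{\Omega}:\exists$ an open line segment in $\overline{\Omega}$ containing $x$ and $y\}$. Co-compact: there is a compact $K\subset\mathcal{C}$ with $G\cdot K=\mathcal{C}$. *)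

(* Stdlib reals (R), with MathComp ordinals 'I_d as index type and
   bigop for finite sums. Projective subsets of P(R^d) are represented by
   their (scale-invariant, 0-free) cones in R^d. *)
From Stdlib Require Import Reals.
From mathcomp Require Import ssreflect ssrfun ssrbool eqtype ssrnat seq fintype bigop.

Set Implicit Arguments. Unset Strict Implicit.
Local Open Scope R_scope.

Definition vec (d : nat) := 'I_d -> R.
Definition mat (d : nat) := 'I_d -> 'I_d -> R.

Definition vzero (d : nat) : vec d := fun _ => 0.
Definition mzero (d : nat) : mat d := fun _ _ => 0.
Definition vscale (d : nat) (t : R) (v : vec d) : vec d := fun i => t * v i.
Definition vadd (d : nat) (v w : vec d) : vec d := fun i => v i + w i.
Definition comb (d : nat) (v w : vec d) (t : R) : vec d :=
  vadd (vscale (1 - t) v) (vscale t w).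
Definition dot (d : nat) (f v : vec d) : R := \big[Rplus/0]_(j < d) (f j * v j).
Definition mapply (d : nat) (A : mat d) (v : vec d) : vec d :=
  fun i => \big[Rplus/0]_(j < d) (A i j * v j).
Definition mmul (d : nat) (A B : mat d) : mat d :=
  fun i k => \big[Rplus/0]_(j < d) (A i j * B j k).
Definition mid (d : nat) : mat d := fun i j => if i == j then 1 else 0.
Arguments vzero d : clear implicits.
Arguments mzero d : clear implicits.
Arguments mid d : clear implicits.
Definition mscale (d : nat) (t : R) (A : mat d) : mat d := fun i j => t * A i j.

Definition close (d : nat) (v w : vec d) (eps : R) : Prop :=
  forall i, Rabs (v i - w i) < eps.
Definition mclose (d : nat) (A B : mat d) (eps : R) : Prop :=
  forall i j, Rabs (A i j - B i j) < eps.

(* w represents the same projective point as v (w = t v, t <> 0) *)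
Definition proportional (d : nat) (w v : vec d) : Prop :=
  exists t, t <> 0 /\ w = vscale t v.

(* a subset of P(R^d), given as its cone in R^d \ {0} *)
Definition cone_set (d : nat) (S : vec d -> Prop) : Prop :=
  ~ S (vzero d) /\ forall v t, t <> 0 -> (S v <-> S (vscale t v)).

Definition proj_open (d : nat) (S : vec d -> Prop) : Prop :=
  forall v, S v -> exists eps, 0 < eps /\ forall w, close v w eps -> S w.

(* closure in P(R^d) (as a cone) *)
Definition pclosure (d : nat) (S : vec d -> Prop) (v : vec d) : Prop :=
  v <> vzero d /\ forall eps, 0 < eps -> exists w, S w /\ close v w eps.

(* properly convex domain: open, nonempty, and a bounded convex set in the
   affine chart {f <> 0} (identified with the slice {f = 1}) *)
Definition properly_convex_domain (d : nat) (Om : vec d -> Prop) : Prop :=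
  cone_set Om /\ proj_open Om /\ (exists v, Om v) /\
  exists f : vec d,
    (forall v, Om v -> dot f v <> 0) /\
    (exists M, forall v, Om v -> dot f v = 1 -> forall i, Rabs (v i) <= M) /\
    (forall v w t, Om v -> Om w -> dot f v = 1 -> dot f w = 1 ->
        0 <= t <= 1 -> Om (comb v w t)).

(* C (a subset of Om) is convex: whenever the segment between [v],[w]
   lies in Om, it lies in C (chart-free form of convexity in Om's chart) *)
Definition convex_in (d : nat) (Om C : vec d -> Prop) : Prop :=
  forall v w, C v -> C w -> (forall t, 0 <= t <= 1 -> Om (comb v w t)) ->
    forall t, 0 <= t <= 1 -> C (comb v w t).

Definition closed_in (d : nat) (Om C : vec d -> Prop) : Prop :=
  forall v, Om v -> pclosure C v -> C v.

Definition invertible (d : nat) (g : mat d) : Prop :=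
  exists h, mmul h g = mid d /\ mmul g h = mid d.

Definition preserves (d : nat) (g : mat d) (S : vec d -> Prop) : Prop :=
  forall v, S v <-> S (mapply g v).

(* Gs = {g in GL_d : [g] in G}, for a subgroup G of Stab_Om(C) <= PGL_d *)
Definition lifted_subgroup_Stab (d : nat) (Om C : vec d -> Prop)
    (Gs : mat d -> Prop) : Prop :=
  (forall g, Gs g -> invertible g /\ preserves g Om /\ preserves g C) /\
  Gs (mid d) /\
  (forall g h, Gs g -> Gs h -> Gs (mmul g h)) /\
  (forall g, Gs g -> exists h, Gs h /\ mmul h g = mid d) /\
  (forall g t, Gs g -> t <> 0 -> Gs (mscale t g)).

(* G acts co-compactly on C: there is a compact K in P(R^d), K subset C,
   with G.K = C.  A compact K in P(R^d) is given by a compact set of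
   representatives K' (closed, bounded, 0 not in K') in R^d. *)
Definition cocompact (d : nat) (Gs : mat d -> Prop) (C : vec d -> Prop) : Prop :=
  exists K : vec d -> Prop,
    (forall k, K k -> C k) /\
    (exists M, forall k, K k -> forall i, Rabs (k i) <= M) /\
    (forall v, (forall eps, 0 < eps -> exists w, K w /\ close v w eps) -> K v) /\
    (forall v, C v -> exists g k, Gs g /\ K k /\ proportional v (mapply g k)).

Definition inSpan (d : nat) (C : vec d -> Prop) (w : vec d) : Prop :=
  exists (n : nat) (c : nat -> R) (u : nat -> vec d),
    (forall k, (k < n)%nat -> C (u k)) /\
    w = (fun i => \big[Rplus/0]_(k < n) (c k * u k i)).

(* relative interior: interior in the projective span *)
Definition relint (d : nat) (C : vec d -> Prop) (v : vec d) : Prop :=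
  C v /\ exists eps, 0 < eps /\
    forall w, inSpan C w -> close v w eps -> C w.

(* boundary  dC = cl C \ relint C ;  ideal boundary d_i C = dC \ C *)
Definition pboundary (d : nat) (C : vec d -> Prop) (v : vec d) : Prop :=
  pclosure C v /\ ~ relint C v.
Definition idealBoundary (d : nat) (C : vec d -> Prop) (v : vec d) : Prop :=
  pboundary C v /\ ~ C v.

(* open face F_Om(x): {x} together with the y in cl Om such that some open
   segment (a,b) contained in cl Om contains x and y *)
Definition openFace (d : nat) (Om : vec d -> Prop) (x y : vec d) : Prop :=
  proportional y x \/
  (pclosure Om y /\
   exists (a b : vec d) (s t : R),
     (forall r, 0 <= r <= 1 -> pclosure Om (comb a b r)) /\
     0 < s < 1 /\ 0 < t < 1 /\
     proportional x (comb a b s) /\ proportional y (comb a b t)).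

(* closure of the lifts of G in End(R^d) *)
Definition End_closure (d : nat) (Gs : mat d -> Prop) (T : mat d) : Prop :=
  forall eps, 0 < eps -> exists g, Gs g /\ mclose T g eps.

(* T(S) = {[T v] : [v] in S} as a cone *)
Definition imgset (d : nat) (T : mat d) (S : vec d -> Prop) (w : vec d) : Prop :=
  exists v, S v /\ proportional w (mapply T v).

(* Fix an affine chart {f <> 0} in which Om is bounded and convex, and p0 in C
   on the side of x.  The points q_n = (1 - s_n) p0 + s_n x (s_n -> 1) lie in
   C, so q_n = g_n k_n with g_n in Gs and k_n in the compact set K.  After
   extraction k_n -> k; since k_n eventually lies in a fixed ball of Om, the
   key estimate "the entries of g are bounded by |f(g v)| on a ball around v"
   (entries_bound) bounds the g_n, and a further extraction gives g_n -> T
   with T k = x.  The same estimate shows that T does not vanish on Om.  Open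
   segments of Om through k are mapped onto segments through x, so T(Om) lies
   in the open face of x; conversely a point y of that face is reached by
   pulling the segment [x, y] back by g_n^-1: the pulled-back displacements
   stay bounded (displacement_bound), and a limit u satisfies T u = y, with u
   in C when y is in the closure of C. *)

From Stdlib Require Import Reals Lra Lia.
From Stdlib Require Import Classical ClassicalEpsilon FunctionalExtensionality.
From mathcomp Require Import ssreflect ssrfun ssrbool eqtype ssrnat seq fintype bigop.
From HB Require Import structures.

Set Implicit Arguments. Unset Strict Implicit.
Local Open Scope R_scope.

HB.instance Definition _ :=
  Monoid.isComLaw.Build R 0 Rplus (fun a b c => esym (Rplus_assoc a b c))
    Rplus_comm Rplus_0_l.

Lemma choice_fun (A B : Type) (P : A -> B -> Prop) :
  (forall a, exists b, P a b) -> exists g, forall a, P a (g a).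
Proof.
move=> H; exists (fun a => proj1_sig (constructive_indefinite_description _ (H a))).
by move=> a; exact: (proj2_sig (constructive_indefinite_description _ (H a))).
Qed.

Definition extraction (phi : nat -> nat) : Prop := forall n, (phi n < phi (S n))%coq_nat.

Lemma extraction_ge phi : extraction phi -> forall n, (n <= phi n)%coq_nat.
Proof. move=> H; elim=> [|n IH]; [lia | have := H n; lia]. Qed.

Lemma extraction_mono phi : extraction phi ->
  forall n m, (n <= m)%coq_nat -> (phi n <= phi m)%coq_nat.
Proof.
move=> H n m; elim: m => [|m IH] Hle; first by have -> : n = 0%nat by lia.
case: (Nat.eq_dec n (S m)) => [->|Hne]; first lia.
have := H m; have := IH ltac:(lia); lia.
Qed.

Lemma extraction_comp phi psi :
  extraction phi -> extraction psi -> extraction (fun n => phi (psi n)).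
Proof.
move=> H1 H2 n; have := H2 n => h.
have := @extraction_mono phi H1 (psi n).+1 (psi n.+1) ltac:(lia); have := H1 (psi n); lia.
Qed.

Lemma extraction_shift phi N : extraction phi -> extraction (fun n => phi (n + N)%nat).
Proof. by move=> H n; rewrite addSn; exact: H. Qed.

Lemma cv_sub u l phi : extraction phi -> Un_cv u l -> Un_cv (fun n => u (phi n)) l.
Proof.
move=> Hp H eps He; case: (H eps He) => N HN; exists N => n Hn.
apply: HN; have := extraction_ge Hp n; unfold ge in *; lia.
Qed.

Lemma cv_const c : Un_cv (fun _ => c) c.
Proof. by move=> eps He; exists 0%nat => n _; rewrite /R_dist Rminus_diag Rabs_R0. Qed.

Lemma cv_ext (u v : nat -> R) l : (forall n, u n = v n) -> Un_cv u l -> Un_cv v l.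
Proof. by move=> E H eps He; case: (H eps He) => N HN; exists N => n Hn; rewrite -E; auto. Qed.

Lemma cv_to_one : Un_cv (fun n => 1 - / (INR n + 2)) 1.
Proof.
move=> eps He; have [N [HN HN0]] := archimed_cor1 eps He; exists N => n Hn.
rewrite /R_dist; have Hp : 0 < INR n + 2 by have := pos_INR n; lra.
have -> : 1 - / (INR n + 2) - 1 = - / (INR n + 2) by ring.
rewrite Rabs_Ropp Rabs_right; last by apply/Rle_ge/Rlt_le/Rinv_0_lt_compat.
apply: Rle_lt_trans HN; apply: Rinv_le_contravar; first by apply: lt_0_INR; lia.
have : (N <= n)%coq_nat by unfold ge in Hn; lia.
move/le_INR; lra.
Qed.

Lemma to_one_range n : 1 / 2 <= 1 - / (INR n + 2) < 1.
Proof.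
have Hp : 0 < INR n + 2 by have := pos_INR n; lra.
have : 0 < / (INR n + 2) by apply: Rinv_0_lt_compat.
have : / (INR n + 2) <= / 2 by apply: Rinv_le_contravar; [lra | have := pos_INR n; lra].
lra.
Qed.

Lemma Rabs_le_bounds a B : Rabs a <= B -> -B <= a <= B.
Proof. by unfold Rabs; destruct (Rcase_abs a); lra. Qed.

Lemma bolzano_weierstrass (u : nat -> R) B : (forall n, Rabs (u n) <= B) ->
  exists phi l, extraction phi /\ Un_cv (fun n => u (phi n)) l.
Proof.
move=> Hb; have [l Hl] : exists l, ValAdh u l.
  apply: (Bolzano_Weierstrass u (fun c => -B <= c <= B)); first exact: compact_P3.
  by move=> n; exact/Rabs_le_bounds/Hb.
have step : forall N m, exists p, (N <= p)%coq_nat /\ Rabs (u p - l) < / (INR m + 1).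
  move=> N m; have Hpos : 0 < / (INR m + 1).
    by apply: Rinv_0_lt_compat; have := pos_INR m; lra.
  have Hnb : neighbourhood (disc l (mkposreal _ Hpos)) l by exists (mkposreal _ Hpos).
  by case: (Hl _ N Hnb) => p [Hp1 Hp2]; exists p.
have [nxt nxtP] := choice_fun (fun Nm => step Nm.1 Nm.2).
pose phi := fix phi n := match n with 0 => nxt (0, 0)%nat | S k => nxt (S (phi k), S k) end.
exists phi, l; split.
  by move=> n /=; have /= := (nxtP (S (phi n), S n)).1; lia.
move=> eps He; have [N HN] := archimed_cor1 eps He; exists N => n Hn; rewrite /R_dist.
have Hb2 : Rabs (u (phi n) - l) < / (INR n + 1).
  by case: n Hn => [|n] Hn /=; exact: (nxtP _).2.
apply: (Rlt_le_trans _ _ _ Hb2); apply: Rle_trans (Rlt_le _ _ (proj1 HN)).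
apply: Rinv_le_contravar; first by apply: lt_0_INR; exact: HN.2.
have : (N <= n)%coq_nat by unfold ge in Hn; lia.
move/le_INR; lra.
Qed.

Lemma bolzano_weierstrass_fin (I : finType) (u : nat -> I -> R) B :
  (forall n i, Rabs (u n i) <= B) ->
  exists phi (l : I -> R), extraction phi /\ forall i, Un_cv (fun n => u (phi n) i) (l i).
Proof.
move=> Hb; suff: forall s : seq I, exists phi (l : I -> R), extraction phi /\
    forall i, i \in s -> Un_cv (fun n => u (phi n) i) (l i).
  move=> /(_ (enum I)) [phi [l [H1 H2]]]; exists phi, l; split => // i.
  by apply: H2; rewrite mem_enum.
elim=> [|i0 s [phi [l [H1 H2]]]].
  by exists id, (fun _ => 0); split => // n /=; lia.
have [psi [li [Hp Hc]]] := @bolzano_weierstrass (fun n => u (phi n) i0) B (fun n => Hb _ _).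
exists (fun n => phi (psi n)), (fun j => if j == i0 then li else l j); split.
  exact: extraction_comp.
move=> j; rewrite in_cons; case: eqP => [->|_] /= Hj; first exact: Hc.
exact: (@cv_sub (fun n => u (phi n) j) _ _ Hp (H2 j Hj)).
Qed.

Lemma cv_uniform (I : finType) (u : nat -> I -> R) (l : I -> R) :
  (forall i, Un_cv (fun n => u n i) (l i)) -> forall eps, 0 < eps ->
  exists N, forall n, (N <= n)%coq_nat -> forall i, Rabs (u n i - l i) < eps.
Proof.
move=> H eps He; suff: forall s : seq I, exists N, forall n, (N <= n)%coq_nat ->
    forall i, i \in s -> Rabs (u n i - l i) < eps.
  by move=> /(_ (enum I)) [N HN]; exists N => n Hn i; apply: HN => //; rewrite mem_enum.
elim=> [|i0 s [N HN]]; first by exists 0%nat.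
have [N0 HN0] := H i0 eps He; exists (Nat.max N N0) => n Hn j.
rewrite in_cons; case: eqP => [->|_] /= Hj; first by apply: HN0; unfold ge; lia.
by apply: HN => //; lia.
Qed.

Section Sums.
Variable I : Type.
Implicit Types r : seq I.

Lemma sum_cv r (F : nat -> I -> R) (L : I -> R) :
  (forall j, Un_cv (fun n => F n j) (L j)) ->
  Un_cv (fun n => \big[Rplus/0]_(j <- r) F n j) (\big[Rplus/0]_(j <- r) L j).
Proof.
move=> H; elim: r => [|j r IH].
  by apply: (cv_ext (u := fun _ => 0)) => [n|]; rewrite ?big_nil //; exact: cv_const.
apply: (cv_ext (u := fun n => F n j + \big[Rplus/0]_(j <- r) F n j)) => [n|].
  by rewrite big_cons.
by rewrite big_cons; exact: CV_plus.
Qed.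

Lemma sum_lin r (F G : I -> R) c1 c2 :
  \big[Rplus/0]_(j <- r) (c1 * F j + c2 * G j) =
  c1 * \big[Rplus/0]_(j <- r) F j + c2 * \big[Rplus/0]_(j <- r) G j.
Proof. by elim: r => [|j r IH]; rewrite ?big_nil ?big_cons; [ring | rewrite IH; ring]. Qed.

Lemma sum_scal r (F : I -> R) c :
  \big[Rplus/0]_(j <- r) (c * F j) = c * \big[Rplus/0]_(j <- r) F j.
Proof. by elim: r => [|j r IH]; rewrite ?big_nil ?big_cons; [ring | rewrite IH; ring]. Qed.

Lemma sum_le r (F G : I -> R) : (forall j, F j <= G j) ->
  \big[Rplus/0]_(j <- r) F j <= \big[Rplus/0]_(j <- r) G j.
Proof. by move=> H; elim: r => [|j r IH]; rewrite ?big_nil ?big_cons; [lra | have := H j; lra]. Qed.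

Lemma sum_abs r (F : I -> R) :
  Rabs (\big[Rplus/0]_(j <- r) F j) <= \big[Rplus/0]_(j <- r) Rabs (F j).
Proof.
elim: r => [|j r IH]; rewrite ?big_nil ?big_cons; first by rewrite Rabs_R0; lra.
by apply: Rle_trans (Rabs_triang _ _) _; lra.
Qed.

Lemma sum_ge0 r (F : I -> R) : (forall j, 0 <= F j) -> 0 <= \big[Rplus/0]_(j <- r) F j.
Proof. by move=> H; elim: r => [|j r IH]; rewrite ?big_nil ?big_cons; [lra | have := H j; lra]. Qed.
End Sums.

Section Linear.
Variable d : nat.
Implicit Types (f v w a b : vec d) (A B : mat d).

Lemma vext v w : (forall i, v i = w i) -> v = w.
Proof. exact: functional_extensionality. Qed.

Lemma mapply_lin A a b c1 c2 i :
  mapply A (fun j => c1 * a j + c2 * b j) i = c1 * mapply A a i + c2 * mapply A b i.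
Proof. by rewrite /mapply -sum_lin; apply: eq_bigr => j _; ring. Qed.

Lemma dot_lin f a b c1 c2 :
  dot f (fun j => c1 * a j + c2 * b j) = c1 * dot f a + c2 * dot f b.
Proof. by rewrite /dot -sum_lin; apply: eq_bigr => j _; ring. Qed.

Lemma mapply_aff A a b t i :
  mapply A (fun i => a i + t * b i) i = mapply A a i + t * mapply A b i.
Proof.
rewrite -[mapply A a i]Rmult_1_l -mapply_lin /mapply.
by apply: eq_bigr => j _; ring.
Qed.

Lemma dot_aff f a b t : dot f (fun i => a i + t * b i) = dot f a + t * dot f b.
Proof. by rewrite -[dot f a]Rmult_1_l -dot_lin /dot; apply: eq_bigr => j _; ring. Qed.

Lemma dot_sub f a b : dot f (fun i => a i - b i) = dot f a - dot f b.
Proof.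
rewrite (_ : dot f a - dot f b = dot f a + -1 * dot f b); last ring.
by rewrite -dot_aff /dot; apply: eq_bigr => j _; ring.
Qed.

Lemma dot_scale f a t : dot f (vscale t a) = t * dot f a.
Proof. by rewrite /dot /vscale -sum_scal; apply: eq_bigr => j _; ring. Qed.

Lemma dot_comb f a b t : dot f (comb a b t) = (1 - t) * dot f a + t * dot f b.
Proof. exact: dot_lin. Qed.

Lemma dot_zero f : dot f (vzero d) = 0.
Proof. by rewrite /dot big1 // => j _; rewrite /vzero; ring. Qed.

Lemma mapply_scale A a t i : mapply A (vscale t a) i = t * mapply A a i.
Proof. by rewrite /mapply /vscale -sum_scal; apply: eq_bigr => j _; ring. Qed.

Lemma mapply_comb A a b t i :
  mapply A (comb a b t) i = (1 - t) * mapply A a i + t * mapply A b i.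
Proof. exact: mapply_lin. Qed.

Lemma mapply_mscale t A v i : mapply (mscale t A) v i = t * mapply A v i.
Proof. by rewrite /mapply /mscale -sum_scal; apply: eq_bigr => j _; ring. Qed.

Lemma mapply_mmul A B v i : mapply (mmul A B) v i = mapply A (mapply B v) i.
Proof.
rewrite /mapply /mmul; under eq_bigr => j _ do rewrite Rmult_comm -sum_scal.
rewrite exchange_big /=; apply: eq_bigr => k _.
by rewrite -sum_scal; apply: eq_bigr => j _; ring.
Qed.

Lemma mapply_mid v i : mapply (mid d) v i = v i.
Proof.
rewrite /mapply /mid (bigD1 i) //= eqxx big1 => [|j Hj]; first ring.
by rewrite eq_sym (negbTE Hj); ring.
Qed.

Lemma invertible_apply A : invertible A -> exists B,
  (forall v, mapply B (mapply A v) = v) /\ (forall v, mapply A (mapply B v) = v).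
Proof.
move=> [B [HBA HAB]]; exists B; split => v; apply: vext => i.
  by rewrite -mapply_mmul HBA mapply_mid.
by rewrite -mapply_mmul HAB mapply_mid.
Qed.

Definition l1norm f := \big[Rplus/0]_(j < d) Rabs (f j).

Lemma l1norm_ge0 f : 0 <= l1norm f.
Proof. by apply: sum_ge0 => j; exact: Rabs_pos. Qed.

Lemma coord_le_l1norm v i : Rabs (v i) <= l1norm v.
Proof.
rewrite /l1norm (bigD1 i) //=; have : 0 <= \big[Rplus/0]_(j < d | j != i) Rabs (v j).
  by apply: big_ind => [|x y|j _]; [lra | lra | exact: Rabs_pos].
by move=> H; rewrite -{1}(Rplus_0_r (Rabs (v i))); exact: Rplus_le_compat_l.
Qed.

Lemma dot_bound f v (c : R) : (forall j, Rabs (v j) <= c) -> Rabs (dot f v) <= l1norm f * c.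
Proof.
move=> H; apply: Rle_trans (sum_abs _ _) _; rewrite /l1norm Rmult_comm -sum_scal.
apply: sum_le => j; rewrite Rabs_mult Rmult_comm.
by apply: Rmult_le_compat_r; [exact: Rabs_pos | exact: H].
Qed.

Lemma comb_bound a b t i : 0 <= t <= 1 -> Rabs (comb a b t i) <= l1norm a + l1norm b.
Proof.
move=> Ht; rewrite /comb /vadd /vscale; apply: Rle_trans (Rabs_triang _ _) _.
rewrite !Rabs_mult (Rabs_right (1 - t)) ?(Rabs_right t); try lra.
have := coord_le_l1norm a i; have := coord_le_l1norm b i.
by have := Rabs_pos (a i); have := Rabs_pos (b i); nra.
Qed.

Lemma comb1 a b : comb a b 1 = b.
Proof. by apply: vext => i; rewrite /comb /vadd /vscale; ring. Qed.

Lemma cv_comb_to_end a b (s : nat -> R) i :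
  Un_cv s 1 -> Un_cv (fun n => comb a b (s n) i) (b i).
Proof.
move=> Hs; have := CV_plus _ _ _ _ (CV_mult _ _ _ _ (CV_minus _ _ _ _ (cv_const 1) Hs)
  (cv_const (a i))) (CV_mult _ _ _ _ Hs (cv_const (b i))).
by rewrite (_ : (1 - 1) * a i + 1 * b i = b i); last ring.
Qed.

Lemma close_dot f v w e : close v w e -> Rabs (dot f v - dot f w) <= l1norm f * e.
Proof. by move=> H; rewrite -dot_sub; apply: dot_bound => j; apply: Rlt_le; exact: H. Qed.

Lemma mapply_cv (An : nat -> mat d) T (wn : nat -> vec d) w i :
  (forall i j, Un_cv (fun n => An n i j) (T i j)) ->
  (forall j, Un_cv (fun n => wn n j) (w j)) ->
  Un_cv (fun n => mapply (An n) (wn n) i) (mapply T w i).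
Proof. by move=> HA Hw; apply: sum_cv => j; exact: CV_mult. Qed.

Lemma dot_cv f (wn : nat -> vec d) w :
  (forall j, Un_cv (fun n => wn n j) (w j)) -> Un_cv (fun n => dot f (wn n)) (dot f w).
Proof. by move=> Hw; apply: sum_cv => j; apply: CV_mult => //; exact: cv_const. Qed.

Lemma pclosure_mono (S S' : vec d -> Prop) w :
  (forall v, S v -> S' v) -> pclosure S w -> pclosure S' w.
Proof. by move=> H [H1 H2]; split => // e /H2 [w' [Hw1 Hw2]]; exists w'; auto. Qed.

Lemma pclosure_scale (S : vec d -> Prop) w t :
  cone_set S -> t <> 0 -> pclosure S w -> pclosure S (vscale t w).
Proof.
move=> [_ HS] Ht [Hw0 Hw]; split.
  move=> E; apply: Hw0; apply: vext => i.
  by have /Rmult_integral [] : t * w i = 0 := f_equal (fun z => z i) E.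
move=> e He; have Hta : 0 < Rabs t by apply: Rabs_pos_lt.
have [w' [Hw'1 Hw'2]] := Hw (e / Rabs t) ltac:(apply: Rdiv_lt_0_compat; lra).
exists (vscale t w'); split; first exact: (proj1 (HS w' t Ht) Hw'1).
move=> i; rewrite /vscale -Rmult_minus_distr_l Rabs_mult.
apply: (Rmult_lt_reg_r (/ Rabs t)); first exact: Rinv_0_lt_compat.
rewrite Rmult_comm -Rmult_assoc Rinv_l ?Rmult_1_l; [exact: Hw'2 | lra].
Qed.

Lemma limit_in_closure (S : vec d -> Prop) (un : nat -> vec d) w : (forall n, S (un n)) ->
  (forall i, Un_cv (fun n => un n i) (w i)) -> w <> vzero d -> pclosure S w.
Proof.
move=> HS Hc Hw; split => // e He; have [N HN] := cv_uniform Hc He.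
by exists (un N); split => // i; rewrite -Rabs_Ropp Ropp_minus_distr; exact: HN.
Qed.

Lemma compact_subseq (K : vec d -> Prop) MK (kn : nat -> vec d) :
  (forall k, K k -> forall i, Rabs (k i) <= MK) ->
  (forall v, (forall eps, 0 < eps -> exists w, K w /\ close v w eps) -> K v) ->
  (forall n, K (kn n)) ->
  exists phi k, extraction phi /\ K k /\ forall i, Un_cv (fun n => kn (phi n) i) (k i).
Proof.
move=> Hb Hcl HK.
have [phi [k [Hphi Hk]]] := bolzano_weierstrass_fin (fun n i => Hb _ (HK n) i).
exists phi, k; split => //; split => //.
apply: Hcl => eps He; have [N HN] := cv_uniform Hk He.
by exists (kn (phi N)); split => // i; rewrite -Rabs_Ropp Ropp_minus_distr; exact: HN.
Qed.

Lemma cone_same_side (S : vec d -> Prop) f v r :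
  cone_set S -> S v -> dot f v <> 0 -> r <> 0 ->
  exists c, c <> 0 /\ S (vscale c v) /\ 0 < dot f (vscale c v) * r.
Proof.
move=> [_ HS] Hv Hfv Hr; have : dot f v * r <> 0 by apply: Rmult_integral_contrapositive.
case: (Rlt_dec 0 (dot f v * r)) => h Hne.
  exists 1; split; first lra.
  by split; [apply/(HS v 1) => //; lra | rewrite dot_scale; lra].
exists (-1); split; first lra.
by split; [apply/(HS v (-1)) => //; lra | rewrite dot_scale; lra].
Qed.
End Linear.

Lemma aff_sign A B t1 t2 : t1 <= t2 -> (forall t, t1 <= t <= t2 -> A + t * B <> 0) ->
  0 < (A + t1 * B) * (A + t2 * B).
Proof.
move=> Ht H; have H1 := H t1 ltac:(lra); have H2 := H t2 ltac:(lra).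
apply: Rnot_le_lt => Hle.
have Hneg : (A + t1 * B) * (A + t2 * B) < 0.
  case: (Rle_lt_or_eq_dec _ _ Hle) => // Heq; exfalso.
  by case: (Rmult_integral _ _ Heq).
have HB : B <> 0 by move=> HB; rewrite HB in Hneg; nra.
have E1 : A + t1 * B = B * (t1 - (- A / B)) by field.
have E2 : A + t2 * B = B * (t2 - (- A / B)) by field.
have HBB : 0 < B * B by nra.
apply: (H (- A / B)); last by field.
by split; apply: Rnot_lt_le => Hc; move: Hneg; rewrite E1 E2; nra.
Qed.

Lemma sign_trans a b c : 0 < a * b -> 0 < b * c -> 0 < a * c.
Proof. by move=> H1 H2; have := Rmult_lt_0_compat _ _ H1 H2; nra. Qed.

Lemma le_eps a b c : 0 <= c -> (forall eps, 0 < eps -> a <= b + c * eps) -> a <= b.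
Proof.
move=> Hc H; apply: Rnot_lt_le => Hlt.
have := H ((a - b) / (2 * (c + 1))) ltac:(apply: Rdiv_lt_0_compat; lra).
have Hp : 0 < / (2 * (c + 1)) by apply: Rinv_0_lt_compat; lra.
have : c * / (2 * (c + 1)) <= / 2.
  apply: (Rmult_le_reg_r (2 * (c + 1))); first lra.
  by rewrite Rmult_assoc Rinv_l; [field_simplify; lra | lra].
rewrite /Rdiv; nra.
Qed.

Lemma Rdiv_le_0_compat a b : 0 <= a -> 0 < b -> 0 <= a / b.
Proof. by move=> Ha Hb; apply: Rmult_le_pos => //; apply/Rlt_le/Rinv_0_lt_compat. Qed.

Lemma pos_comb X Y r : 0 < X -> 0 < Y -> 0 <= r <= 1 -> 0 < (1 - r) * X + r * Y.
Proof.
move=> HX HY Hr; case: (Rle_lt_or_eq_dec _ _ (proj1 Hr)) => [h|<-]; last lra.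
have : 0 <= (1 - r) * X by apply: Rmult_le_pos; lra.
have : 0 < r * Y by apply: Rmult_lt_0_compat.
lra.
Qed.

Lemma abs_sign a b : Rabs (b - a) < Rabs a -> 0 < a * b.
Proof. by unfold Rabs; destruct (Rcase_abs (b - a)); destruct (Rcase_abs a); nra. Qed.

Lemma two_abs F x : 0 < F * (F + x) -> 0 < F * (F - x) ->
  Rabs (F + x) + Rabs (F - x) = 2 * Rabs F.
Proof.
by unfold Rabs; destruct (Rcase_abs (F + x)); destruct (Rcase_abs (F - x));
  destruct (Rcase_abs F); nra.
Qed.

Lemma two_tri (p y : R) : 2 * Rabs y <= Rabs (p + y) + Rabs (p - y).
Proof.
have E : 2 * y = (p + y) + - (p - y) by ring.
have <- : Rabs (2 * y) = 2 * Rabs y by rewrite Rabs_mult Rabs_right; lra.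
by rewrite E; apply: Rle_trans (Rabs_triang _ _) _; rewrite Rabs_Ropp; lra.
Qed.

Lemma sign_interval_bound A X lam : 0 < lam -> 0 < (A - lam * X) * A ->
  0 < A * (A + (1 + lam) * X) -> Rabs X <= Rabs A / lam.
Proof.
move=> Hl H1 H2; apply: (Rmult_le_reg_r lam) => //.
rewrite /Rdiv Rmult_assoc Rinv_l; last lra.
by rewrite Rmult_1_r; unfold Rabs; destruct (Rcase_abs X); destruct (Rcase_abs A); nra.
Qed.

Lemma extended_param_range s t lam mu : 0 < s < 1 -> 0 < t < 1 -> 0 <= lam ->
  lam <= s -> lam <= 1 - s -> lam <= t -> lam <= 1 - t -> - lam <= mu <= 1 + lam ->
  0 <= s + mu * (t - s) <= 1.
Proof.
move=> Hs Ht Hl H1 H2 H3 H4 Hmu.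
case: (Rle_dec mu 0) => h1; first by case: (Rle_dec s t) => h2; split; nra.
case: (Rle_dec mu 1) => h3; by case: (Rle_dec s t) => h2; split; nra.
Qed.

Section Chart.
Variables (d : nat) (Om : vec d -> Prop) (f : vec d) (M : R).
Hypothesis HM : 0 <= M.
Hypothesis Hcone : cone_set Om.
Hypothesis Hopen : proj_open Om.
Hypothesis Hf : forall v, Om v -> dot f v <> 0.
Hypothesis Hbd : forall v, Om v -> dot f v = 1 -> forall i, Rabs (v i) <= M.
Hypothesis Hcvx : forall v w t, Om v -> Om w -> dot f v = 1 -> dot f w = 1 ->
  0 <= t <= 1 -> Om (comb v w t).
Implicit Types (v w a b k u x y : vec d).

Lemma Om_scale v t : Om v -> t <> 0 -> Om (vscale t v).
Proof. by move=> H Ht; apply/(Hcone.2 v t Ht). Qed.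

Lemma Om_nonzero v : Om v -> v <> vzero d.
Proof. by move=> Hv E; apply: Hcone.1; rewrite -E. Qed.

(* Boundedness of the slice, rescaled: |w_i| <= M |f(w)| on Om. *)
Lemma Om_bound w i : Om w -> Rabs (w i) <= M * Rabs (dot f w).
Proof.
move=> Hw; have Hfw := Hf Hw.
have Hw' : Om (vscale (/ dot f w) w) by apply: Om_scale => //; exact: Rinv_neq_0_compat.
have := Hbd Hw'; rewrite dot_scale Rinv_l // => /(_ erefl i).
rewrite /vscale Rabs_mult Rabs_inv => H.
have Hp : 0 < Rabs (dot f w) by apply: Rabs_pos_lt.
apply: (Rmult_le_reg_l (/ Rabs (dot f w))); first exact: Rinv_0_lt_compat.
by have -> : / Rabs (dot f w) * (M * Rabs (dot f w)) = M by field; lra.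
Qed.

Lemma segment_in_Om a b r : Om a -> Om b -> 0 < dot f a * dot f b -> 0 <= r <= 1 ->
  Om (comb a b r).
Proof.
move=> Ha Hb Hab Hr; have Hfa := Hf Ha; have Hfb := Hf Hb.
set fa := dot f a in Hab Hfa *; set fb := dot f b in Hab Hfb *.
have Ha' : Om (vscale (/ fa) a) by apply: Om_scale => //; exact: Rinv_neq_0_compat.
have Hb' : Om (vscale (/ fb) b) by apply: Om_scale => //; exact: Rinv_neq_0_compat.
set c := (1 - r) * fa + r * fb.
have Hc : c * fa > 0.
  rewrite (_ : c * fa = (1 - r) * (fa * fa) + r * (fa * fb)); last by rewrite /c; ring.
  by apply: pos_comb => //; nra.
have Hcb : c * fb > 0.
  rewrite (_ : c * fb = (1 - r) * (fa * fb) + r * (fb * fb)); last by rewrite /c; ring.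
  by apply: pos_comb => //; nra.
have Hc0 : c <> 0 by move=> E; rewrite E in Hc; lra.
set r' := r * fb / c.
have e1 : r' * (c * c) = r * (c * fb) by rewrite /r'; field.
have e2 : (1 - r') * (c * c) = (1 - r) * (c * fa).
  rewrite /r' (_ : (1 - r * fb / c) * (c * c) = c * (c - r * fb)); last by field.
  by rewrite {2}/c; ring.
have Hr' : 0 <= r' <= 1.
  have Hcc : 0 < c * c by nra.
  have : 0 <= (1 - r') * (c * c) by rewrite e2; nra.
  have : 0 <= r' * (c * c) by rewrite e1; nra.
  by split; nra.
have := Hcvx Ha' Hb' (t := r'); rewrite !dot_scale -/fa -/fb !Rinv_l //.
move=> /(_ erefl erefl Hr') /(Om_scale)/(_ Hc0); congr Om; apply: vext => i.
rewrite /vscale /comb /vadd /vscale /r'.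
rewrite (_ : c * ((1 - r * fb / c) * (/ fa * a i) + r * fb / c * (/ fb * b i))
    = (c - r * fb) / fa * a i + r * b i); last by field.
by rewrite /c; field.
Qed.

Lemma ball_same_side k u eps : (forall w, close k w eps -> Om w) -> close k u eps ->
  0 < dot f k * dot f u.
Proof.
move=> Hball Hu.
have := @aff_sign (dot f k) (dot f u - dot f k) 0 1 ltac:(lra).
rewrite (_ : dot f k + 0 * _ = dot f k); last ring.
rewrite (_ : dot f k + 1 * _ = dot f u); last ring.
apply => t Ht; rewrite -dot_sub -dot_aff; apply: Hf; apply: Hball => i.
apply: Rle_lt_trans (Hu i); rewrite -Rabs_Ropp.
rewrite (_ : k i - (k i + t * (u i - k i)) = t * (k i - u i)); last ring.
rewrite Rabs_Ropp Rabs_mult; have : Rabs t <= 1 by rewrite Rabs_right; lra.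
by have := Rabs_pos (k i - u i); have := Rabs_pos t; nra.
Qed.

(* If w is approximated by points of Om on the side of k, then [k, w) lies
   in Om: translate the ball around k instead of moving w. *)
Lemma interior_segment_approx k w r : Om k ->
  (forall e, 0 < e -> exists w', Om w' /\ 0 < dot f w' * dot f k /\ close w w' e) ->
  0 <= r < 1 -> Om (comb k w r).
Proof.
move=> Hk Happ Hr; case: (Hopen Hk) => eps [He Hball].
have [w' [Hw' [Hs Hcl]]] := Happ (eps * (1 - r)) ltac:(nra).
set k' : vec d := fun i => k i + (r / (1 - r)) * (w i - w' i).
have Hk'c : close k k' eps.
  move=> i; rewrite /k' (_ : k i - _ = - (r / (1 - r) * (w i - w' i))); last ring.
  rewrite Rabs_Ropp Rabs_mult Rabs_right; last by apply/Rle_ge/Rdiv_le_0_compat; lra.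
  have : r / (1 - r) * Rabs (w i - w' i) <= r / (1 - r) * (eps * (1 - r)).
    by apply: Rmult_le_compat_l; [apply: Rdiv_le_0_compat; lra | have := Hcl i; lra].
  have -> : r / (1 - r) * (eps * (1 - r)) = r * eps by field; lra.
  nra.
have Hs2 := ball_same_side Hball Hk'c.
have : Om (comb k' w' r) by apply: segment_in_Om => //; [exact: Hball | nra | lra].
by congr Om; apply: vext => i; rewrite /comb /vadd /vscale /k'; field; lra.
Qed.

Lemma closure_bound w i : pclosure Om w -> Rabs (w i) <= M * Rabs (dot f w).
Proof.
move=> [Hw0 Hw]; apply: (@le_eps _ _ (M * l1norm f + 1)); first by have := l1norm_ge0 f; nra.
move=> e He; have [w' [Hw' Hc]] := Hw e He.
have h1 := Om_bound i Hw'; have h2 := close_dot f Hc; have h3 := Hc i.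
have : Rabs (w i) <= Rabs (w' i) + e.
  rewrite {1}(_ : w i = (w i - w' i) + w' i); last ring.
  by apply: Rle_trans (Rabs_triang _ _) _; lra.
have : Rabs (dot f w') <= Rabs (dot f w) + l1norm f * e.
  rewrite {1}(_ : dot f w' = (dot f w' - dot f w) + dot f w); last ring.
  apply: Rle_trans (Rabs_triang _ _) _.
  by rewrite -Rabs_Ropp Ropp_minus_distr in h2; lra.
by have := l1norm_ge0 f; nra.
Qed.

(* f does not vanish on the closure of Om: this is proper convexity. *)
Lemma closure_dot_nonzero w : pclosure Om w -> dot f w <> 0.
Proof.
move=> Hw E; apply: Hw.1; apply: vext => i; have := closure_bound i Hw.
rewrite E Rabs_R0 Rmult_0_r /vzero => h; case: (Req_dec (w i) 0) => // Hne.
by have := Rabs_pos_lt _ Hne; lra.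
Qed.

Lemma closure_approx_same_side (S : vec d -> Prop) w : (forall v, S v -> Om v) ->
  pclosure S w -> forall e, 0 < e ->
  exists w', S w' /\ close w w' e /\ 0 < dot f w * dot f w'.
Proof.
move=> HS Hw e He; have Hfw := closure_dot_nonzero (pclosure_mono HS Hw).
have Hp : 0 < Rabs (dot f w) by apply: Rabs_pos_lt.
have HF := l1norm_ge0 f.
set e' := Rmin e (Rabs (dot f w) / (2 * (l1norm f + 1))).
have He' : 0 < e' by apply: Rmin_pos => //; apply: Rdiv_lt_0_compat => //; lra.
have [w' [Hw' Hc]] := Hw.2 e' He'; exists w'; split => //; split.
  by move=> i; apply: Rlt_le_trans (Hc i) _; exact: Rmin_l.
apply: abs_sign; have := close_dot f Hc; rewrite -Rabs_Ropp Ropp_minus_distr => h.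
apply: Rle_lt_trans h _.
have h1 : e' <= Rabs (dot f w) / (2 * (l1norm f + 1)) by exact: Rmin_r.
have : l1norm f * e' <= l1norm f * (Rabs (dot f w) / (2 * (l1norm f + 1))).
  exact: Rmult_le_compat_l.
have : l1norm f * (Rabs (dot f w) / (2 * (l1norm f + 1))) < Rabs (dot f w).
  by apply: (Rmult_lt_reg_r (2 * (l1norm f + 1))); [lra | field_simplify; nra].
lra.
Qed.

Lemma segment_to_closure k w r : Om k -> pclosure Om w -> 0 < dot f k * dot f w ->
  0 <= r < 1 -> Om (comb k w r).
Proof.
move=> Hk Hw Hs Hr; apply: interior_segment_approx => // e He.
have [w' [Hw' [Hc Hs']]] := closure_approx_same_side (fun v h => h) Hw He.
exists w'; split => //; split => //.
by have := Hf Hk; have := closure_dot_nonzero Hw; nra.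
Qed.

Lemma segment_to_limit k (kn wn : nat -> vec d) w r : Om k ->
  (forall n, Om (wn n)) -> (forall n, 0 < dot f (kn n) * dot f (wn n)) ->
  (forall i, Un_cv (fun n => kn n i) (k i)) -> (forall i, Un_cv (fun n => wn n i) (w i)) ->
  0 <= r < 1 -> Om (comb k w r).
Proof.
move=> Hk Hwn Hs Hkn Hw Hr; apply: interior_segment_approx => // e He.
case: (Hopen Hk) => eps [Heps Hball].
have [N1 HN1] := cv_uniform Hw He; have [N2 HN2] := cv_uniform Hkn Heps.
pose n := Nat.max N1 N2; exists (wn n); split => //; split.
  have Hc : close k (kn n) eps by move=> i; rewrite -Rabs_Ropp Ropp_minus_distr; apply: HN2; lia.
  have := ball_same_side Hball Hc; have := Hs n; nra.
by move=> i; rewrite -Rabs_Ropp Ropp_minus_distr; apply: HN1; lia.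
Qed.

Definition ev (i : 'I_d) : vec d := fun q => if q == i then 1 else 0.

Lemma mapply_ev (g : mat d) i j : mapply g (ev i) j = g j i.
Proof.
rewrite /mapply /ev (bigD1 i) //= eqxx big1 => [|q Hq]; first ring.
by rewrite (negbTE Hq); ring.
Qed.

(* Key estimate: a linear map g preserving Om, and a ball of radius eps
   around v inside Om, control every entry of g by |f(g v)|.  Both
   g(v + t e_i) and g(v - t e_i) lie in Om, on the side of g v. *)
Lemma entries_bound (g : mat d) v eps : 0 < eps ->
  (forall w, Om w -> Om (mapply g w)) -> (forall w, close v w eps -> Om w) ->
  forall j i, Rabs (g j i) <= (2 * M / eps) * Rabs (dot f (mapply g v)).
Proof.
move=> He Hg Hball j i; set t0 := eps / 2.
set P := fun t => mapply g (fun q => v q + t * ev i q).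
have HP : forall t, Rabs t <= t0 -> Om (P t).
  move=> t Ht; apply: Hg; apply: Hball => q; rewrite /ev.
  rewrite (_ : v q - _ = - (t * (if q == i then 1 else 0))); last ring.
  by rewrite Rabs_Ropp Rabs_mult; case: (q == i); rewrite ?Rabs_R1 ?Rabs_R0 /t0 in Ht *; lra.
have EP : forall t, P t = fun j => mapply g v j + t * mapply g (ev i) j.
  by move=> t; apply: vext => q; rewrite /P mapply_aff.
have FP : forall t, dot f (P t) = dot f (mapply g v) + t * dot f (mapply g (ev i)).
  by move=> t; rewrite EP dot_aff.
set F := dot f (mapply g v); set B := dot f (mapply g (ev i)).
have Ht0 : 0 < t0 by rewrite /t0; lra.
have S1 : 0 < (F + 0 * B) * (F + t0 * B).
  apply: aff_sign; first lra.
  by move=> t Ht; rewrite -FP; apply/Hf/HP; rewrite Rabs_right; lra.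
have S2 : 0 < (F + (- t0) * B) * (F + 0 * B).
  apply: aff_sign; first lra.
  by move=> t Ht; rewrite -FP; apply/Hf/HP; rewrite Rabs_left1; lra.
have B1 := Om_bound j (HP t0 ltac:(rewrite Rabs_right; lra)).
have B2 := Om_bound j (HP (- t0) ltac:(rewrite Rabs_left1; lra)).
rewrite FP EP /= -/F -/B mapply_ev in B1; rewrite FP EP /= -/F -/B mapply_ev in B2.
have Esum : Rabs (F + t0 * B) + Rabs (F - t0 * B) = 2 * Rabs F by apply: two_abs; nra.
have T := two_tri (mapply g v j) (t0 * g j i).
have B2' : Rabs (mapply g v j - t0 * g j i) <= M * Rabs (F - t0 * B).
  rewrite (_ : mapply g v j - t0 * g j i = mapply g v j + - t0 * g j i); last ring.
  by rewrite (_ : F - t0 * B = F + - t0 * B); last ring.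
have : 2 * Rabs (t0 * g j i) <= 2 * M * Rabs F by nra.
rewrite Rabs_mult Rabs_right; last lra.
move=> h; apply: (Rmult_le_reg_l t0) => //; rewrite /t0 in h *.
have -> : eps / 2 * (2 * M / eps * Rabs F) = M * Rabs F by field; lra.
lra.
Qed.

Lemma path_same_side kk W lo hi : lo <= 0 <= hi ->
  (forall mu, lo <= mu <= hi -> Om (fun i => kk i + mu * W i)) ->
  forall mu, lo <= mu <= hi -> 0 < dot f kk * dot f (fun i => kk i + mu * W i).
Proof.
move=> Hlh HZ mu Hmu; rewrite dot_aff; case: (Rle_dec 0 mu) => h.
  have := @aff_sign (dot f kk) (dot f W) 0 mu h; rewrite Rmult_0_l Rplus_0_r.
  by apply => t Ht; rewrite -dot_aff; apply/Hf/HZ; lra.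
have := @aff_sign (dot f kk) (dot f W) mu 0 ltac:(lra); rewrite Rmult_0_l Rplus_0_r Rmult_comm.
by apply => t Ht; rewrite -dot_aff; apply/Hf/HZ; lra.
Qed.

Lemma displacement_bound kk (V : vec d) s lam j : Om kk -> 0 < lam -> 1 / 2 <= s ->
  (forall mu, - lam <= mu <= 1 + lam -> Om (fun i => kk i + mu * (s * V i))) ->
  Rabs (V j) <= 6 * M * Rabs (dot f kk) / lam.
Proof.
move=> Hkk Hlam Hs HZ.
set A := dot f kk; set X := s * dot f V.
have FZ : forall mu, dot f (fun i => kk i + mu * (s * V i)) = A + mu * X.
  by move=> mu; rewrite dot_aff (dot_scale f V s : dot f (fun i => s * V i) = _).
have HPs := path_same_side (lo := - lam) (hi := 1 + lam) ltac:(lra) HZ.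
have S1 := HPs (- lam) ltac:(lra); have S2 := HPs (1 + lam) ltac:(lra).
rewrite !FZ -/A in S1 S2.
have HX : Rabs X <= Rabs A / lam.
  apply: sign_interval_bound => //.
  by rewrite (_ : (A - lam * X) * A = A * (A + - lam * X)) //; ring.
have B1 := Om_bound j (HZ (- lam) ltac:(lra)); rewrite FZ /= in B1.
have B0 := Om_bound j Hkk; rewrite -/A in B0.
have h0 : lam * Rabs X <= Rabs A.
  have := Rmult_le_compat_l lam _ _ (Rlt_le _ _ Hlam) HX.
  by have -> : lam * (Rabs A / lam) = Rabs A by field; lra.
have h1 : Rabs (A + - lam * X) <= 2 * Rabs A.
  by apply: Rle_trans (Rabs_triang _ _) _; rewrite Rabs_mult Rabs_Ropp (Rabs_right lam); lra.
have h2 : lam * s * Rabs (V j) <= 3 * M * Rabs A.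
  have E : lam * s * V j = kk j - (kk j + - lam * (s * V j)) by ring.
  have E2 : Rabs (lam * s * V j) = lam * s * Rabs (V j).
    by rewrite !Rabs_mult (Rabs_right lam) ?(Rabs_right s); lra.
  rewrite -E2 E; apply: Rle_trans (Rabs_triang _ _) _; rewrite Rabs_Ropp.
  by have := Rmult_le_compat_l M _ _ HM h1; lra.
have h3 : lam * Rabs (V j) <= 6 * M * Rabs A.
  have hV := Rabs_pos (V j).
  have : 0 <= lam * Rabs (V j) * (2 * s - 1) by apply: Rmult_le_pos; [apply: Rmult_le_pos|]; lra.
  nra.
apply: (Rmult_le_reg_l lam) => //.
by have -> : lam * (6 * M * Rabs A / lam) = 6 * M * Rabs A by field; lra.
Qed.

Lemma segment_extension k u : Om k -> Om u -> 0 < dot f k * dot f u ->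
  exists a b s1 t1, Om a /\ Om b /\ 0 < dot f a * dot f b /\ 0 < s1 < 1 /\ 0 < t1 < 1 /\
    comb a b s1 = k /\ comb a b t1 = u.
Proof.
move=> Hk Hu Hku; case: (Hopen Hk) => e1 [He1 Hb1]; case: (Hopen Hu) => e2 [He2 Hb2].
pose D := 1 + l1norm (fun j => k j - u j).
have HD : forall i, Rabs (k i - u i) <= D - 1.
  by move=> i; have := coord_le_l1norm (fun j => k j - u j) i; rewrite /D; lra.
have HD1 : 1 <= D by have := l1norm_ge0 (fun j => k j - u j); rewrite /D; lra.
pose mn := Rmin e1 e2; have Hmn : 0 < mn by apply: Rmin_pos.
pose dl := mn / (2 * D); have Hdl : 0 < dl by apply: Rdiv_lt_0_compat; lra.
have Hdlb : forall i, dl * Rabs (k i - u i) < mn.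
  move=> i; have : dl * Rabs (k i - u i) <= dl * (D - 1).
    by apply: Rmult_le_compat_l; [lra | exact: HD].
  have -> : dl * (D - 1) = mn / 2 - dl by rewrite /dl; field; lra.
  lra.
pose a := fun i => k i + dl * (k i - u i); pose b := fun i => u i + dl * (u i - k i).
have Hca : close k a e1.
  move=> i; rewrite /a (_ : k i - _ = - (dl * (k i - u i))); last ring.
  rewrite Rabs_Ropp Rabs_mult Rabs_right; last lra.
  by have := Hdlb i; have := Rmin_l e1 e2; rewrite -/mn; lra.
have Hcb : close u b e2.
  move=> i; rewrite /b (_ : u i - _ = dl * (k i - u i)); last ring.
  rewrite Rabs_mult Rabs_right; last lra.
  by have := Hdlb i; have := Rmin_r e1 e2; rewrite -/mn; lra.
have Sa := ball_same_side Hb1 Hca; have Sb := ball_same_side Hb2 Hcb.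
have Hint : forall c, 0 < c < 1 + 2 * dl -> 0 < c / (1 + 2 * dl) < 1.
  move=> c Hc; split; first by apply: Rdiv_lt_0_compat; lra.
  by apply: (Rmult_lt_reg_r (1 + 2 * dl)); [lra | field_simplify; lra].
exists a, b, (dl / (1 + 2 * dl)), ((1 + dl) / (1 + 2 * dl)).
split; first exact: Hb1; split; first exact: Hb2.
split; first by apply: (@sign_trans _ (dot f u)) => //; apply: (@sign_trans _ (dot f k)); nra.
split; first by apply: Hint; lra.
split; first by apply: Hint; lra.
by split; apply: vext => i; rewrite /comb /vadd /vscale /a /b; field; lra.
Qed.

Lemma closed_segment_same_side a b : (forall r, 0 <= r <= 1 -> pclosure Om (comb a b r)) ->
  forall r1 r2, 0 <= r1 <= 1 -> 0 <= r2 <= 1 -> 0 < dot f (comb a b r1) * dot f (comb a b r2).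
Proof.
move=> H.
have key : forall r1 r2, 0 <= r1 <= 1 -> 0 <= r2 <= 1 -> r1 <= r2 ->
    0 < dot f (comb a b r1) * dot f (comb a b r2).
  move=> r1 r2 H1 H2 H12; rewrite !dot_comb.
  have E : forall r, dot f a + r * (dot f b - dot f a) = (1 - r) * dot f a + r * dot f b.
    by move=> r; ring.
  have := @aff_sign (dot f a) (dot f b - dot f a) r1 r2 H12; rewrite !E.
  by apply => t Ht; rewrite E -dot_comb; apply/closure_dot_nonzero/H; lra.
move=> r1 r2 H1 H2; case: (Rle_dec r1 r2) => h; first exact: key.
by rewrite Rmult_comm; apply: key => //; lra.
Qed.

Lemma face_outside_Om x w : ~ Om x -> openFace Om x w -> ~ Om w.
Proof.
move=> Hx [[t [Ht ->]] | [Hw [a [b [s [t [Hseg [Hs [Ht [[al [Hal Ex]] [be [Hbe Ew]]]]]]]]]]]] HOm.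
  apply: Hx; have := Om_scale HOm (Rinv_neq_0_compat _ Ht); congr Om.
  by apply: vext => i; rewrite /vscale; field.
have HEt : Om (comb a b t).
  rewrite Ew in HOm; have := Om_scale HOm (Rinv_neq_0_compat _ Hbe); congr Om.
  by apply: vext => i; rewrite /vscale; field.
suff : Om (comb a b s) by move=> H; apply: Hx; rewrite Ex; exact: Om_scale.
have Hsg := closed_segment_same_side Hseg.
case: (Rle_dec s t) => Hst.
  have := @segment_to_closure (comb a b t) (comb a b 0) (1 - s / t) HEt (Hseg 0 ltac:(lra))
    (Hsg t 0 ltac:(lra) ltac:(lra)).
  have : 0 <= 1 - s / t < 1.
    have : s / t <= 1 by apply: (Rmult_le_reg_r t); [lra | field_simplify; lra].
    have : 0 < s / t by apply: Rdiv_lt_0_compat; lra.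
    lra.
  by move=> h /(_ h); congr Om; apply: vext => i; rewrite /comb /vadd /vscale; field; lra.
have := @segment_to_closure (comb a b t) (comb a b 1) ((s - t) / (1 - t)) HEt
  (Hseg 1 ltac:(lra)) (Hsg t 1 ltac:(lra) ltac:(lra)).
have : 0 <= (s - t) / (1 - t) < 1.
  split; first by apply: Rdiv_le_0_compat; lra.
  by apply: (Rmult_lt_reg_r (1 - t)); [lra | field_simplify; lra].
by move=> h /(_ h); congr Om; apply: vext => i; rewrite /comb /vadd /vscale; field; lra.
Qed.

Definition extended_segment x y (lam : R) : Prop :=
  forall mu, - lam <= mu <= 1 + lam ->
    pclosure Om (comb x y mu) /\ 0 < dot f x * dot f (comb x y mu).

Lemma face_line x w a b s0 t0 :
  (forall r, 0 <= r <= 1 -> pclosure Om (comb a b r)) -> 0 < s0 < 1 -> 0 < t0 < 1 ->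
  proportional x (comb a b s0) -> proportional w (comb a b t0) ->
  exists y lam, proportional w y /\ 0 < lam /\ extended_segment x y lam.
Proof.
move=> Hseg Hs0 Ht0 [al [Hal ->]] [be [Hbe ->]].
pose lam := Rmin (Rmin s0 (1 - s0)) (Rmin t0 (1 - t0)).
have Hl1 : lam <= s0 by apply: Rle_trans (Rmin_l _ _) (Rmin_l _ _).
have Hl2 : lam <= 1 - s0 by apply: Rle_trans (Rmin_l _ _) (Rmin_r _ _).
have Hl3 : lam <= t0 by apply: Rle_trans (Rmin_r _ _) (Rmin_l _ _).
have Hl4 : lam <= 1 - t0 by apply: Rle_trans (Rmin_r _ _) (Rmin_r _ _).
have Hlam : 0 < lam by apply: Rmin_pos; apply: Rmin_pos; lra.
exists (vscale al (comb a b t0)), lam; split.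
  exists (be / al); split; first by apply: Rmult_integral_contrapositive; split => //;
    exact: Rinv_neq_0_compat.
  by apply: vext => i; rewrite /vscale; field.
split => // mu Hmu.
have Hr := extended_param_range Hs0 Ht0 (Rlt_le _ _ Hlam) Hl1 Hl2 Hl3 Hl4 Hmu.
rewrite (_ : comb _ _ mu = vscale al (comb a b (s0 + mu * (t0 - s0)))); last first.
  by apply: vext => i; rewrite /comb /vadd /vscale; ring.
split; first by apply: pclosure_scale => //; exact: Hseg.
rewrite !dot_scale; have := closed_segment_same_side Hseg (r1 := s0) (r2 := s0 + mu * (t0 - s0)).
move=> /(_ ltac:(lra) Hr) H; have : 0 < al * al by nra.
nra.
Qed.

Section Stabilizer.
Variables (C : vec d -> Prop) (Gs : mat d -> Prop).
Hypothesis HconeC : cone_set C.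
Hypothesis HCOm : forall v, C v -> Om v.
Hypothesis HconvC : convex_in Om C.
Hypothesis HclC : closed_in Om C.
Hypothesis Hstab : forall g, Gs g -> invertible g /\ preserves g Om /\ preserves g C.

Lemma stab_Om g w : Gs g -> Om w -> Om (mapply g w).
Proof. by move=> Hg; apply: (proj1 ((Hstab Hg).2.1 w)). Qed.

Lemma stab_C g w : Gs g -> C w -> C (mapply g w).
Proof. by move=> Hg; apply: (proj1 ((Hstab Hg).2.2 w)). Qed.

Lemma stab_reflect_Om g w : Gs g -> Om (mapply g w) -> Om w.
Proof. by move=> Hg; apply: (proj2 ((Hstab Hg).2.1 w)). Qed.

Lemma stab_reflect_C g w : Gs g -> C (mapply g w) -> C w.
Proof. by move=> Hg; apply: (proj2 ((Hstab Hg).2.2 w)). Qed.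

Lemma segment_in_C p0 w r : C p0 -> pclosure C w -> 0 < dot f p0 * dot f w -> 0 <= r < 1 ->
  C (comb p0 w r).
Proof.
move=> Hp0 Hw Hs Hr; have Hp0O := HCOm Hp0.
apply: HclC; first exact: segment_to_closure (pclosure_mono HCOm Hw) Hs Hr.
split; first exact/Om_nonzero/segment_to_closure/Hr/Hs/(pclosure_mono HCOm Hw).
move=> e He; have [w' [Hw' [Hc Hs']]] := closure_approx_same_side HCOm Hw He.
exists (comb p0 w' r); split.
  apply: HconvC => //; last lra.
  by move=> t Ht; apply: segment_in_Om => //; [exact: HCOm | exact: sign_trans Hs Hs'].
move=> i; rewrite /comb /vadd /vscale.
rewrite (_ : (1 - r) * p0 i + r * w i - ((1 - r) * p0 i + r * w' i) = r * (w i - w' i)); last ring.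
rewrite Rabs_mult Rabs_right; last lra.
by have := Hc i; have := Rabs_pos (w i - w' i); nra.
Qed.

Lemma orbit_entries_bound k eps g kk : 0 < eps -> (forall w, close k w eps -> Om w) ->
  Gs g -> close k kk (eps / 2) ->
  forall i j, Rabs (g i j) <= (2 * M / (eps / 2)) * Rabs (dot f (mapply g kk)).
Proof.
move=> He Hball Hg Hkk i j; apply: entries_bound; first lra.
  by move=> w; exact: stab_Om.
move=> w Hw; apply: Hball => l.
rewrite (_ : k l - w l = (kk l - w l) - (kk l - k l)); last ring.
apply: Rle_lt_trans (Rabs_triang _ _) _; rewrite Rabs_Ropp (Rabs_minus_sym (kk l) (k l)).
by have := Hkk l; have := Hw l; lra.
Qed.

Section LimitMap.
Variables (x p0 : vec d) (g : nat -> mat d) (kn : nat -> vec d) (s : nat -> R).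
Variables (T : mat d) (k : vec d) (MK : R).
Hypothesis Hxcl : pclosure C x.
Hypothesis Hp0 : C p0.
Hypothesis Hp0x : 0 < dot f p0 * dot f x.
Hypothesis Hg : forall n, Gs (g n).
Hypothesis HknO : forall n, Om (kn n).
Hypothesis Hknb : forall n i, Rabs (kn n i) <= MK.
Hypothesis Hs : forall n, 1 / 2 <= s n < 1.
Hypothesis Hs1 : Un_cv s 1.
Hypothesis Hgk : forall n, mapply (g n) (kn n) = comb p0 x (s n).
Hypothesis HgT : forall i j, Un_cv (fun n => g n i j) (T i j).
Hypothesis Hkk : forall i, Un_cv (fun n => kn n i) (k i).
Hypothesis HkC : C k.

Lemma limit_apply_cv u i : Un_cv (fun n => mapply (g n) u i) (mapply T u i).
Proof. by apply: (mapply_cv (wn := fun _ => u)) => // j; exact: cv_const. Qed.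

Lemma limit_maps_k : mapply T k = x.
Proof.
apply: vext => i; apply: (UL_sequence (fun n => mapply (g n) (kn n) i)).
  exact: mapply_cv.
apply: (cv_ext (u := fun n => comb p0 x (s n) i)); last exact: cv_comb_to_end.
by move=> n; rewrite Hgk.
Qed.

(* T is not zero, since T k = x is not. *)
Lemma limit_entry_nonzero : exists i j, T i j <> 0.
Proof.
apply: NNPP => H; apply: Hxcl.1; rewrite -limit_maps_k; apply: vext => i.
rewrite /mapply /vzero big1 // => j _.
have -> : T i j = 0 by apply: NNPP => h; apply: H; exists i, j.
ring.
Qed.

(* By entries_bound, |g_n i j| <= c |f(g_n u)| on a ball around u in Om;
   in the limit, f(T u) = 0 would force T = 0. *)
Lemma limit_dot_nonzero u : Om u -> dot f (mapply T u) <> 0.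
Proof.
move=> Hu; have [i0 [j0 HT0]] := limit_entry_nonzero.
case: (Hopen Hu) => eu [Heu Hbu].
have Hnb : forall n, Rabs (g n i0 j0) <= (2 * M / eu) * Rabs (dot f (mapply (g n) u)).
  by move=> n; apply: (entries_bound Heu _ Hbu) => w; exact: stab_Om.
have := Rle_cv_lim Hnb (cv_cvabs _ _ (HgT i0 j0))
  (CV_mult _ _ _ _ (cv_const (2 * M / eu)) (cv_cvabs _ _ (dot_cv f (limit_apply_cv u)))).
move=> h E; rewrite E Rabs_R0 Rmult_0_r in h.
by have := Rabs_pos_lt _ HT0; lra.
Qed.

Lemma limit_nonzero_on_Om u : Om u -> mapply T u <> vzero d.
Proof. by move=> Hu E; apply: (limit_dot_nonzero Hu); rewrite E dot_zero. Qed.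

Lemma limit_image_closure (S : vec d -> Prop) u : (forall v, S v -> Om v) ->
  (forall n w, S w -> S (mapply (g n) w)) -> S u -> pclosure S (mapply T u).
Proof.
move=> HSO HS Hu; apply: (limit_in_closure (un := fun n => mapply (g n) u)).
- by move=> n; exact: HS.
- exact: limit_apply_cv.
- exact/limit_nonzero_on_Om/HSO.
Qed.

Lemma limit_closure_Om u : Om u -> pclosure Om (mapply T u).
Proof. by apply: limit_image_closure => // n w; exact: stab_Om. Qed.

Lemma limit_closure_C u : C u -> pclosure C (mapply T u).
Proof. by apply: limit_image_closure => // n w; exact: stab_C. Qed.

Lemma limit_in_End_closure : End_closure Gs T.
Proof.
move=> eps He; have [N HN] := @cv_uniform ('I_d * 'I_d)%type (fun n p => g n p.1 p.2)
  (fun p => T p.1 p.2) (fun p => HgT p.1 p.2) eps He.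
exists (g N); split => // i j; rewrite -Rabs_Ropp Ropp_minus_distr.
exact: (HN N (le_n N) (i, j)).
Qed.

(* T(Om) lies in the open face of x = T k: an open segment of Om through k
   and (a rescaling of) u is mapped to a segment of the closure through x. *)
Lemma image_in_face u w : Om u -> proportional w (mapply T u) -> openFace Om x w.
Proof.
move=> Hu [c [Hc ->]]; have HkO := HCOm HkC.
have [c' [Hc' [Hu' Hside]]] := cone_same_side Hcone Hu (Hf Hu) (Hf HkO).
have [a [b [s1 [t1 [Ha [Hb [Hab [Hs1' [Ht1 [Ek Eu]]]]]]]]]] :=
  segment_extension HkO Hu' ltac:(rewrite Rmult_comm; exact: Hside).
have Tcomb : forall r, comb (mapply T a) (mapply T b) r = mapply T (comb a b r).
  by move=> r; apply: vext => i; rewrite mapply_comb.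
right; split; first by apply: pclosure_scale => //; exact: limit_closure_Om.
exists (mapply T a), (mapply T b), s1, t1; split.
  by move=> r Hr; rewrite Tcomb; apply/limit_closure_Om/segment_in_Om.
do 2 (split => //); split.
  exists 1; split; first lra.
  by rewrite Tcomb Ek limit_maps_k; apply: vext => i; rewrite /vscale; ring.
exists (c / c'); split; first by apply: Rmult_integral_contrapositive; split => //;
  exact: Rinv_neq_0_compat.
rewrite Tcomb Eu; apply: vext => i; rewrite /vscale mapply_scale; field => //.
Qed.

(* Conversely, points of the open face are pulled back along inverses h_n of
   the g_n. *)
Section Pullback.
Variable h : nat -> mat d.
Hypothesis Hhg : forall n z, mapply (h n) (mapply (g n) z) = z.
Hypothesis Hgh : forall n z, mapply (g n) (mapply (h n) z) = z.

(* The pull-back by h_n of the point of [p0, x + mu (y - x)] at parameter s_n. *)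
Definition pulled (y : vec d) (n : nat) (mu : R) : vec d :=
  fun i => kn n i + mu * (s n * mapply (h n) (fun j => y j - x j) i).

Lemma pulled_eq y n mu : pulled y n mu = mapply (h n) (comb p0 (comb x y mu) (s n)).
Proof.
rewrite (_ : comb p0 (comb x y mu) (s n) =
    fun i => comb p0 x (s n) i + (s n * mu) * (y i - x i)); last first.
  by apply: vext => i; rewrite /comb /vadd /vscale; ring.
by apply: vext => i; rewrite mapply_aff -Hgk Hhg /pulled; ring.
Qed.

Lemma pulled_in_Om y n mu : pclosure Om (comb x y mu) -> 0 < dot f x * dot f (comb x y mu) ->
  Om (pulled y n mu).
Proof.
move=> Hcl Hside; rewrite pulled_eq; apply: (stab_reflect_Om (Hg n)); rewrite Hgh.
apply: segment_to_closure => //; first exact: HCOm.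
  exact: sign_trans Hp0x Hside.
by have := Hs n; lra.
Qed.

Lemma pulled_in_C y n : pclosure C y -> 0 < dot f x * dot f y -> C (pulled y n 1).
Proof.
move=> Hcl Hside; rewrite pulled_eq; apply: (stab_reflect_C (Hg n)); rewrite Hgh.
rewrite comb1; apply: segment_in_C => //; first exact: sign_trans Hp0x Hside.
by have := Hs n; lra.
Qed.

Lemma pulled_extended_in_Om y lam : extended_segment x y lam ->
  forall n mu, - lam <= mu <= 1 + lam -> Om (pulled y n mu).
Proof. by move=> Hline n mu /Hline [Hcl Hside]; exact: pulled_in_Om. Qed.

Lemma pulled_displacement_bound y lam : 0 < lam -> extended_segment x y lam ->
  forall n j, Rabs (mapply (h n) (fun j => y j - x j) j) <= 6 * M * (l1norm f * MK) / lam.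
Proof.
move=> Hlam Hline n j.
have HZ := pulled_extended_in_Om Hline n.
apply: Rle_trans (displacement_bound j (HknO n) Hlam (Hs n).1 HZ) _.
rewrite /Rdiv; apply: Rmult_le_compat_r; first by apply/Rlt_le/Rinv_0_lt_compat.
by apply: Rmult_le_compat_l; [lra | exact: dot_bound].
Qed.

(* If the segment [x, y] extends in the closure of Om, then y = T u for some
   u in Om, with u in C when y lies in the closure of C: u is a limit of the
   pulled-back points h_n(q_n + s_n (y - x)) = k_n + s_n h_n (y - x). *)
Lemma preimage_of_line y lam : 0 < lam -> extended_segment x y lam ->
  exists u, Om u /\ mapply T u = y /\ (pclosure C y -> C u).
Proof.
move=> Hlam Hline; have HZ := pulled_extended_in_Om Hline.
have [psi [v [Hpsi Hv]]] := bolzano_weierstrass_fin (pulled_displacement_bound Hlam Hline).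
have Hk2 : forall i, Un_cv (fun n => kn (psi n) i) (k i) by move=> i; exact: cv_sub Hpsi (Hkk i).
have Hs2 : Un_cv (fun n => s (psi n)) 1 by exact: cv_sub Hpsi Hs1.
have Pcv : forall mu i, Un_cv (fun n => pulled y (psi n) mu i) (k i + mu * v i).
  move=> mu i; have := CV_plus _ _ _ _ (Hk2 i)
    (CV_mult _ _ _ _ (cv_const mu) (CV_mult _ _ _ _ Hs2 (Hv i))).
  by rewrite Rmult_1_l.
have Pcv1 : forall i, Un_cv (fun n => pulled y (psi n) 1 i) (k i + v i).
  by move=> i; have := Pcv 1 i; rewrite Rmult_1_l.
pose u := fun i => k i + v i.
have Hu : Om u.
  have := @segment_to_limit k (fun n => kn (psi n)) (fun n => pulled y (psi n) (1 + lam))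
    (fun i => k i + (1 + lam) * v i) (1 / (1 + lam)) (HCOm HkC).
  rewrite (_ : comb k _ (1 / (1 + lam)) = u); last first.
    by apply: vext => i; rewrite /comb /vadd /vscale /u; field; lra.
  apply => //; first by move=> n; apply: HZ; lra.
  - move=> n; apply: (path_same_side (lo := - lam) (hi := 1 + lam)); try lra.
    by move=> mu Hmu; exact: HZ.
  - split; first by apply: Rdiv_le_0_compat; lra.
    by apply: (Rmult_lt_reg_r (1 + lam)); [lra | field_simplify; lra].
have HTu : mapply T u = y.
  apply: vext => i; apply: (UL_sequence (fun n => mapply (g (psi n)) (pulled y (psi n) 1) i)).
    by apply: mapply_cv => // i' j; exact: cv_sub Hpsi (HgT i' j).
  apply: (cv_ext (u := fun n => comb p0 (comb x y 1) (s (psi n)) i)).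
    by move=> n; rewrite pulled_eq Hgh.
  by rewrite comb1; exact: cv_comb_to_end.
exists u; split => //; split => // HyC.
have Hside : 0 < dot f x * dot f y by have := (Hline 1 ltac:(lra)).2; rewrite comb1.
apply: HclC => //; apply: (limit_in_closure (un := fun n => pulled y (psi n) 1)) => //.
- by move=> n; exact: pulled_in_C.
- exact: Om_nonzero.
Qed.
End Pullback.

Lemma face_preimage w : openFace Om x w ->
  exists u, Om u /\ proportional w (mapply T u) /\ (pclosure C w -> C u).
Proof.
case=> [[c [Hc ->]] | [_ [a [b [s0 [t0 [Hseg [Hs0 [Ht0 [Hx Hw]]]]]]]]]].
  by exists k; split; [exact: HCOm | split => //; rewrite limit_maps_k; exists c].
have [h Hh] := choice_fun (fun n => invertible_apply (Hstab (Hg n)).1).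
have [y [lam [[c [Hc Ew]] [Hlam Hline]]]] := face_line Hseg Hs0 Ht0 Hx Hw.
have [u [Hu [HTu HuC]]] := preimage_of_line (fun n => (Hh n).1) (fun n => (Hh n).2) Hlam Hline.
exists u; split => //; split; first by exists c; rewrite HTu.
move=> HwC; apply: HuC; have -> : y = vscale (/ c) w.
  by rewrite Ew; apply: vext => i; rewrite /vscale; field.
by apply: pclosure_scale => //; exact: Rinv_neq_0_compat.
Qed.

Lemma limit_image_Om w : imgset T Om w <-> openFace Om x w.
Proof.
split; first by move=> [u [Hu Hw]]; exact: image_in_face Hw.
by move=> /face_preimage [u [Hu [Hw _]]]; exists u.
Qed.

(* Since x is not in the closed set C, it is not in Om, so neither is its
   open face; T(C) is the part of that face in the ideal boundary of C. *)
Lemma limit_image_C w : ~ C x -> (imgset T C w <-> openFace Om x w /\ idealBoundary C w).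
Proof.
move=> HxC; have HxO : ~ Om x by move=> /HclC /(_ Hxcl).
split.
  move=> [u [Hu Hw]]; have Hface := image_in_face (HCOm Hu) Hw.
  have HwO := face_outside_Om HxO Hface.
  split => //; split; last by move=> /HCOm.
  split; last by move=> [Hrel _]; exact: HwO (HCOm Hrel).
  by case: Hw => c [Hc ->]; apply: pclosure_scale => //; exact: limit_closure_C.
move=> [/face_preimage [u [Hu [Hw HuC]]] [[HwC _] _]].
by exists u; split => //; exact: HuC.
Qed.
End LimitMap.

Section Cocompact.
Variables (K : vec d -> Prop) (MK : R).
Hypothesis HKC : forall k, K k -> C k.
Hypothesis HKb : forall k, K k -> forall i, Rabs (k i) <= MK.
Hypothesis HKcl : forall v, (forall eps, 0 < eps -> exists w, K w /\ close v w eps) -> K v.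
Hypothesis HKcov : forall v, C v -> exists g k, Gs g /\ K k /\ proportional v (mapply g k).
Hypothesis Hscal : forall g t, Gs g -> t <> 0 -> Gs (mscale t g).

(* Since Gs is closed under scaling, every point of C is exactly g k. *)
Lemma cocompact_lift v : C v -> exists g k, Gs g /\ K k /\ mapply g k = v.
Proof.
move=> /HKcov [g [k [Hg [Hk [t [Ht E]]]]]]; exists (mscale t g), k.
by split; [exact: Hscal | split => //; rewrite E; apply: vext => i; rewrite mapply_mscale].
Qed.

Lemma orbit_approach x p0 : pclosure C x -> C p0 -> 0 < dot f p0 * dot f x ->
  exists (G0 : nat -> mat d) (K0 : nat -> vec d), (forall n, Gs (G0 n)) /\
    (forall n, K (K0 n)) /\ forall n, mapply (G0 n) (K0 n) = comb p0 x (1 - / (INR n + 2)).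
Proof.
move=> Hx Hp0 Hp0x.
have HqC : forall n, C (comb p0 x (1 - / (INR n + 2))).
  by move=> n; apply: segment_in_C => //; have := to_one_range n; lra.
have [gk Hgk] : exists gk : nat -> mat d * vec d, forall n,
    Gs (gk n).1 /\ K (gk n).2 /\ mapply (gk n).1 (gk n).2 = comb p0 x (1 - / (INR n + 2)).
  apply: (choice_fun (P := fun n (p : mat d * vec d) =>
    Gs p.1 /\ K p.2 /\ mapply p.1 p.2 = comb p0 x (1 - / (INR n + 2)))) => n.
  by have [g [kk H]] := cocompact_lift (HqC n); exists (g, kk).
exists (fun n => (gk n).1), (fun n => (gk n).2).
by split; [|split] => n; case: (Hgk n) => [? [? ?]].
Qed.

(* Construction of the limit map: extract k_n -> k in K; since k_n then
   eventually lies in a fixed ball of Om, orbit_entries_bound bounds the g_n,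
   and a further extraction gives g_n -> T. *)
Lemma limit_map_exists x p0 : pclosure C x -> C p0 -> 0 < dot f p0 * dot f x ->
  exists (g : nat -> mat d) (kn : nat -> vec d) (s : nat -> R) (T : mat d) (k : vec d),
    (forall n, Gs (g n)) /\ (forall n, K (kn n)) /\ (forall n, 1 / 2 <= s n < 1) /\
    Un_cv s 1 /\ (forall n, mapply (g n) (kn n) = comb p0 x (s n)) /\
    (forall i j, Un_cv (fun n => g n i j) (T i j)) /\
    (forall i, Un_cv (fun n => kn n i) (k i)) /\ K k.
Proof.
move=> Hx Hp0 Hp0x; pose s0 n := 1 - / (INR n + 2).
have [G0 [K0 [HG0 [HK0 HGK0]]]] := orbit_approach Hx Hp0 Hp0x.
have [phi1 [k [Hphi1 [HkK Hk]]]] := compact_subseq HKb HKcl HK0.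
have [eps [Heps Hball]] := Hopen (HCOm (HKC HkK)).
have [N0 HN0] := cv_uniform Hk (ltac:(lra) : 0 < eps / 2).
pose sh n := (n + N0)%nat.
have Hsh : extraction (fun n => phi1 (sh n)) by apply: extraction_shift.
have HGb : forall n i j, Rabs (G0 (phi1 (sh n)) i j) <=
    (2 * M / (eps / 2)) * (l1norm f * (l1norm p0 + l1norm x)).
  move=> n i j; apply: Rle_trans.
    apply: (orbit_entries_bound (kk := K0 (phi1 (sh n))) Heps Hball (HG0 _)).
    by move=> l; rewrite -Rabs_Ropp Ropp_minus_distr; apply: HN0; rewrite /sh -plusE; lia.
  apply: Rmult_le_compat_l.
    by apply: Rmult_le_pos; [lra | apply/Rlt_le/Rinv_0_lt_compat; lra].
  rewrite HGK0; apply: dot_bound => l; apply: comb_bound.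
  by have := to_one_range (phi1 (sh n)); lra.
have [phi2 [Tl [Hphi2 HT]]] := @bolzano_weierstrass_fin ('I_d * 'I_d)%type
  (fun n p => G0 (phi1 (sh n)) p.1 p.2) _ (fun n p => HGb n p.1 p.2).
pose phi n := phi1 (sh (phi2 n)).
have Hphi : extraction phi by exact: extraction_comp Hsh Hphi2.
exists (fun n => G0 (phi n)), (fun n => K0 (phi n)), (fun n => s0 (phi n)),
  (fun i j => Tl (i, j)), k.
split; first by move=> n; exact: HG0.
split; first by move=> n; exact: HK0.
split; first by move=> n; exact: to_one_range.
split; first exact: cv_sub Hphi cv_to_one.
split; first by move=> n; exact: HGK0.
split; first by move=> i j; exact: (HT (i, j)).
by split => // i; apply: (cv_sub (phi := fun n => sh (phi2 n))) (Hk i) => n;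
  have := Hphi2 n; rewrite /sh -!plusE; lia.
Qed.

Lemma ideal_boundary_limit x : (exists v, C v) -> idealBoundary C x ->
  exists T : mat d,
    T <> mzero d /\ End_closure Gs T /\
    (forall v, Om v -> mapply T v <> vzero d) /\
    (forall w, imgset T Om w <-> openFace Om x w) /\
    (forall w, imgset T C w <-> (openFace Om x w /\ idealBoundary C w)).
Proof.
move=> [v Hv] [[Hxcl _] HxC].
have Hfx := closure_dot_nonzero (pclosure_mono HCOm Hxcl).
have [c [_ [Hp0 Hp0x]]] := cone_same_side HconeC Hv (Hf (HCOm Hv)) Hfx.
have [g [kn [s [T [k [Hg [HknK [Hs [Hs1 [Hgk [HgT [Hkk HkK]]]]]]]]]]]] :=
  limit_map_exists Hxcl Hp0 Hp0x.
have HknO : forall n, Om (kn n) by move=> n; exact/HCOm/HKC.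
have Hknb : forall n i, Rabs (kn n i) <= MK by move=> n; exact: HKb.
have HkC := HKC HkK.
exists T; split.
  have [i [j HTij]] := limit_entry_nonzero Hxcl Hs1 Hgk HgT Hkk.
  by move=> E; apply: HTij; rewrite E.
split; first exact: limit_in_End_closure Hg HgT.
split; first by move=> u; exact: limit_nonzero_on_Om Hxcl Hg Hs1 Hgk HgT Hkk u.
split => w.
  exact: limit_image_Om Hxcl Hp0 Hp0x Hg HknO Hknb Hs Hs1 Hgk HgT Hkk HkC w.
exact: limit_image_C Hxcl Hp0 Hp0x Hg HknO Hknb Hs Hs1 Hgk HgT Hkk HkC w HxC.
Qed.
End Cocompact.
End Stabilizer.
End Chart.

Theorem mainTheorem7 (d : nat) (Om C : vec d -> Prop) (Gs : mat d -> Prop)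
  (x : vec d) :
  properly_convex_domain Om ->
  cone_set C -> (exists v, C v) -> (forall v, C v -> Om v) ->
  convex_in Om C -> closed_in Om C ->
  lifted_subgroup_Stab Om C Gs ->
  cocompact Gs C ->
  idealBoundary C x ->
  exists T : mat d,
    T <> mzero d /\ End_closure Gs T /\
    (forall v, Om v -> mapply T v <> vzero d) /\
    (forall w, imgset T Om w <-> openFace Om x w) /\
    (forall w, imgset T C w <-> (openFace Om x w /\ idealBoundary C w)).
Proof.
move=> [HconeOm [HopenOm [_ [f [Hf [[M0 Hbd0] Hcvx]]]]]] HconeC HCne HCOm HconvC HclC
  [Hstab [_ [_ [_ Hscal]]]] [K [HKC [[MK HKb] [HKcl HKcov]]]] Hx.
(* the bound on the slice {f = 1} may be taken nonnegative *)
have HM : 0 <= Rmax M0 0 by exact: Rmax_r.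
have Hbd : forall v, Om v -> dot f v = 1 -> forall i, Rabs (v i) <= Rmax M0 0.
  by move=> v Hv H1 i; apply: Rle_trans (Hbd0 v Hv H1 i) (Rmax_l _ _).
exact: (ideal_boundary_limit HM HconeOm HopenOm Hf Hbd Hcvx HconeC HCOm HconvC HclC Hstab
  HKC HKb HKcl HKcov Hscal HCne Hx).
Qed.
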